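(* Let $\Pi$ be the reversible combinator language described in the context. For every $\Pi$ combinator $c$ there is a $\Pi$ combinator $c^{\dagger}$ (its adjoint, depending only on $c$) such that for all values $v, v'$: if $c\;v \mapsto v'$ then $c^{\dagger}\;v' \mapsto v$.
   Context: The language $\Pi$. Types: $b ::= 0 \mid 1 \mid b+b \mid b\times b \mid \mathit{bool}$. Values: $v ::= () \mid \mathit{left}\,v \mid \mathit{right}\,v \mid (v,v) \mid \mathtt{T} \mid \mathtt{F}$, typed by: $() : 1$; $\mathit{left}\,v : b_1+b_2$ if $v:b_1$; $\mathit{right}\,v : b_1+b_2$ if $v:b_2$; $(v_1,v_2): b_1\times b_2$ if $v_i:b_i$; $\mathtt{T},\mathtt{F}:\mathit{bool}$ ($0$ has no values). Primitive combinators come in dual pairs, each pair written ''$f : A \leftrightarrow B : g$'' meaning $f: A\leftrightarrow B$ and $g : B \leftrightarrow A$, and each is the dual of the other: $\mathit{id}: b\leftrightarrow b:\mathit{id}$; $\mathit{unite}_+ : 0+b\leftrightarrow b : \mathit{uniti}_+$; $\mathit{swap}_+ : b_1+b_2 \leftrightarrow b_2+b_1 : \mathit{swap}_+$; $\mathit{assocl}_+ : b_1+(b_2+b_3)\leftrightarrow (b_1+b_2)+b_3 : \mathit{assocr}_+$; $\mathit{unite}_\times : 1\times b\leftrightarrow b : \mathit{uniti}_\times$; $\mathit{swap}_\times : b_1\times b_2\leftrightarrow b_2\times b_1:\mathit{swap}_\times$; $\mathit{assocl}_\times : b_1\times(b_2\times b_3)\leftrightarrow (b_1\times b_2)\times b_3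 : \mathit{assocr}_\times$; $\mathit{distrib}_0 : 0\times b \leftrightarrow 0 : \mathit{factor}_0$; $\mathit{distrib} : (b_1+b_2)\times b_3 \leftrightarrow (b_1\times b_3)+(b_2\times b_3) : \mathit{factor}$; $\mathit{toSum} : \mathit{bool}\leftrightarrow 1+1 : \mathit{toBool}$. Combinators: $c ::= \text{primitive} \mid c\circ c \mid c\oplus c \mid c\otimes c$, with $c_1\circ c_2 : b_1\leftrightarrow b_3$ if $c_1:b_1\leftrightarrow b_2$, $c_2 : b_2\leftrightarrow b_3$; $c_1\oplus c_2 : b_1+b_2 \leftrightarrow b_3+b_4$ and $c_1\otimes c_2 : b_1\times b_2\leftrightarrow b_3\times b_4$ if $c_1 : b_1\leftrightarrow b_3$, $c_2 : b_2\leftrightarrow b_4$. Forward evaluation $c\;v\mapsto v'$ is the relation defined by: $\mathit{id}\,v\mapsto v$; $\mathit{unite}_+(\mathit{right}\,v)\mapsto v$; $\mathit{uniti}_+\,v\mapsto \mathit{right}\,v$; $\mathit{swap}_+(\mathit{left}\,v)\mapsto \mathit{right}\,v$; $\mathit{swap}_+(\mathit{right}\,v)\mapsto\mathit{left}\,v$; $\mathit{assocl}_+(\mathit{left}\,v_1)\mapsto \mathit{left}(\mathit{left}\,v_1)$; $\mathit{assocl}_+(\mathit{right}(\mathit{left}\,v_2))\mapsto \mathit{left}(\mathit{right}\,v_2)$; $\mathit{assocl}_+(\mathit{right}(\mathit{right}\,v_3))\mapsto\mathit{right}\,v_3$; $\mathit{assocr}_+(\mathit{left}(\mathit{left}\,v_1))\mapsto\mathit{left}\,v_1$;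 $\mathit{assocr}_+(\mathit{left}(\mathit{right}\,v_2))\mapsto \mathit{right}(\mathit{left}\,v_2)$; $\mathit{assocr}_+(\mathit{right}\,v_3)\mapsto\mathit{right}(\mathit{right}\,v_3)$; $\mathit{unite}_\times((),v)\mapsto v$; $\mathit{uniti}_\times\,v\mapsto((),v)$; $\mathit{swap}_\times(v_1,v_2)\mapsto(v_2,v_1)$; $\mathit{assocl}_\times(v_1,(v_2,v_3))\mapsto((v_1,v_2),v_3)$; $\mathit{assocr}_\times((v_1,v_2),v_3)\mapsto(v_1,(v_2,v_3))$; $\mathit{distrib}(\mathit{left}\,v_1,v_3)\mapsto\mathit{left}(v_1,v_3)$; $\mathit{distrib}(\mathit{right}\,v_2,v_3)\mapsto\mathit{right}(v_2,v_3)$; $\mathit{factor}(\mathit{left}(v_1,v_3))\mapsto(\mathit{left}\,v_1,v_3)$; $\mathit{factor}(\mathit{right}(v_2,v_3))\mapsto(\mathit{right}\,v_2,v_3)$; $\mathit{toSum}\,\mathtt{T}\mapsto\mathit{left}\,()$; $\mathit{toSum}\,\mathtt{F}\mapsto\mathit{right}\,()$; $\mathit{toBool}(\mathit{left}\,())\mapsto\mathtt{T}$; $\mathit{toBool}(\mathit{right}\,())\mapsto\mathtt{F}$ ($\mathit{distrib}_0,\mathit{factor}_0$ have no rules since $0$ is empty); and for composites: $(c_1\oplus c_2)(\mathit{left}\,v_1)\mapsto\mathit{left}\,v_2$ if $c_1 v_1\mapsto v_2$; $(c_1\oplus c_2)(\mathit{right}\,v_1)\mapsto\mathit{right}\,v_2$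 if $c_2 v_1\mapsto v_2$; $(c_1\otimes c_2)(v_1,v_2)\mapsto(v_3,v_4)$ if $c_1v_1\mapsto v_3$ and $c_2v_2\mapsto v_4$; $(c_1\circ c_2)v_1\mapsto v_2$ if $c_1 v_1\mapsto v$ and $c_2 v\mapsto v_2$ for some $v$. *)

Inductive ty : Type :=
| Zero : ty
| One : ty
| Plus : ty -> ty -> ty
| Times : ty -> ty -> ty
| Bool : ty.

Inductive val : ty -> Type :=
| vunit : val One
| vleft : forall b1 b2, val b1 -> val (Plus b1 b2)
| vright : forall b1 b2, val b2 -> val (Plus b1 b2)
| vpair : forall b1 b2, val b1 -> val b2 -> val (Times b1 b2)
| vT : val Bool
| vF : val Bool.

Arguments vleft {b1 b2} _.
Arguments vright {b1 b2} _.
Arguments vpair {b1 b2} _ _.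

Inductive comb : ty -> ty -> Type :=
| c_id : forall b, comb b b
| unite_plus : forall b, comb (Plus Zero b) b
| uniti_plus : forall b, comb b (Plus Zero b)
| swap_plus : forall b1 b2, comb (Plus b1 b2) (Plus b2 b1)
| assocl_plus : forall b1 b2 b3, comb (Plus b1 (Plus b2 b3)) (Plus (Plus b1 b2) b3)
| assocr_plus : forall b1 b2 b3, comb (Plus (Plus b1 b2) b3) (Plus b1 (Plus b2 b3))
| unite_times : forall b, comb (Times One b) b
| uniti_times : forall b, comb b (Times One b)
| swap_times : forall b1 b2, comb (Times b1 b2) (Times b2 b1)
| assocl_times : forall b1 b2 b3, comb (Times b1 (Times b2 b3)) (Times (Times b1 b2) b3)
| assocr_times : forall b1 b2 b3, comb (Times (Times b1 b2) b3) (Times b1 (Times b2 b3))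
| distrib0 : forall b, comb (Times Zero b) Zero
| factor0 : forall b, comb Zero (Times Zero b)
| distrib : forall b1 b2 b3, comb (Times (Plus b1 b2) b3) (Plus (Times b1 b3) (Times b2 b3))
| factor : forall b1 b2 b3, comb (Plus (Times b1 b3) (Times b2 b3)) (Times (Plus b1 b2) b3)
| toSum : comb Bool (Plus One One)
| toBool : comb (Plus One One) Bool
| c_seq : forall b1 b2 b3, comb b1 b2 -> comb b2 b3 -> comb b1 b3
| c_plus : forall b1 b2 b3 b4, comb b1 b3 -> comb b2 b4 -> comb (Plus b1 b2) (Plus b3 b4)
| c_times : forall b1 b2 b3 b4, comb b1 b3 -> comb b2 b4 -> comb (Times b1 b2) (Times b3 b4).

Arguments c_seq {b1 b2 b3} _ _.
Arguments c_plus {b1 b2 b3 b4} _ _.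
Arguments c_times {b1 b2 b3 b4} _ _.

Inductive eval : forall {b1 b2}, comb b1 b2 -> val b1 -> val b2 -> Prop :=
| ev_id : forall b (v : val b), eval (c_id b) v v
| ev_unite_plus : forall b (v : val b), eval (unite_plus b) (vright v) v
| ev_uniti_plus : forall b (v : val b), eval (uniti_plus b) v (vright v)
| ev_swap_plus_l : forall b1 b2 (v : val b1),
    eval (swap_plus b1 b2) (vleft v) (vright v)
| ev_swap_plus_r : forall b1 b2 (v : val b2),
    eval (swap_plus b1 b2) (vright v) (vleft v)
| ev_assocl_plus_1 : forall b1 b2 b3 (v1 : val b1),
    eval (assocl_plus b1 b2 b3) (vleft v1) (vleft (vleft v1))
| ev_assocl_plus_2 : forall b1 b2 b3 (v2 : val b2),
    eval (assocl_plus b1 b2 b3) (vright (vleft v2)) (vleft (vright v2))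
| ev_assocl_plus_3 : forall b1 b2 b3 (v3 : val b3),
    eval (assocl_plus b1 b2 b3) (vright (vright v3)) (vright v3)
| ev_assocr_plus_1 : forall b1 b2 b3 (v1 : val b1),
    eval (assocr_plus b1 b2 b3) (vleft (vleft v1)) (vleft v1)
| ev_assocr_plus_2 : forall b1 b2 b3 (v2 : val b2),
    eval (assocr_plus b1 b2 b3) (vleft (vright v2)) (vright (vleft v2))
| ev_assocr_plus_3 : forall b1 b2 b3 (v3 : val b3),
    eval (assocr_plus b1 b2 b3) (vright v3) (vright (vright v3))
| ev_unite_times : forall b (v : val b), eval (unite_times b) (vpair vunit v) v
| ev_uniti_times : forall b (v : val b), eval (uniti_times b) v (vpair vunit v)
| ev_swap_times : forall b1 b2 (v1 : val b1) (v2 : val b2),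
    eval (swap_times b1 b2) (vpair v1 v2) (vpair v2 v1)
| ev_assocl_times : forall b1 b2 b3 (v1 : val b1) (v2 : val b2) (v3 : val b3),
    eval (assocl_times b1 b2 b3) (vpair v1 (vpair v2 v3)) (vpair (vpair v1 v2) v3)
| ev_assocr_times : forall b1 b2 b3 (v1 : val b1) (v2 : val b2) (v3 : val b3),
    eval (assocr_times b1 b2 b3) (vpair (vpair v1 v2) v3) (vpair v1 (vpair v2 v3))
| ev_distrib_l : forall b1 b2 b3 (v1 : val b1) (v3 : val b3),
    eval (distrib b1 b2 b3) (vpair (vleft v1) v3) (vleft (vpair v1 v3))
| ev_distrib_r : forall b1 b2 b3 (v2 : val b2) (v3 : val b3),
    eval (distrib b1 b2 b3) (vpair (vright v2) v3) (vright (vpair v2 v3))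
| ev_factor_l : forall b1 b2 b3 (v1 : val b1) (v3 : val b3),
    eval (factor b1 b2 b3) (vleft (vpair v1 v3)) (vpair (vleft v1) v3)
| ev_factor_r : forall b1 b2 b3 (v2 : val b2) (v3 : val b3),
    eval (factor b1 b2 b3) (vright (vpair v2 v3)) (vpair (vright v2) v3)
| ev_toSum_T : eval toSum vT (vleft vunit)
| ev_toSum_F : eval toSum vF (vright vunit)
| ev_toBool_T : eval toBool (vleft vunit) vT
| ev_toBool_F : eval toBool (vright vunit) vF
| ev_plus_l : forall b1 b2 b3 b4 (c1 : comb b1 b3) (c2 : comb b2 b4)
    (v1 : val b1) (v2 : val b3),
    eval c1 v1 v2 -> eval (c_plus c1 c2) (vleft v1) (vleft v2)
| ev_plus_r : forall b1 b2 b3 b4 (c1 : comb b1 b3) (c2 : comb b2 b4)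
    (v1 : val b2) (v2 : val b4),
    eval c2 v1 v2 -> eval (c_plus c1 c2) (vright v1) (vright v2)
| ev_times : forall b1 b2 b3 b4 (c1 : comb b1 b3) (c2 : comb b2 b4)
    (v1 : val b1) (v2 : val b2) (v3 : val b3) (v4 : val b4),
    eval c1 v1 v3 -> eval c2 v2 v4 ->
    eval (c_times c1 c2) (vpair v1 v2) (vpair v3 v4)
| ev_seq : forall b1 b2 b3 (c1 : comb b1 b2) (c2 : comb b2 b3)
    (v1 : val b1) (v : val b2) (v2 : val b3),
    eval c1 v1 v -> eval c2 v v2 -> eval (c_seq c1 c2) v1 v2.


Fixpoint adjoint {b1 b2} (c : comb b1 b2) : comb b2 b1 :=
  match c in comb b1 b2 return comb b2 b1 with
  | c_id b => c_id b
  | unite_plus b => uniti_plus b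
  | uniti_plus b => unite_plus b
  | swap_plus b1 b2 => swap_plus b2 b1
  | assocl_plus b1 b2 b3 => assocr_plus b1 b2 b3
  | assocr_plus b1 b2 b3 => assocl_plus b1 b2 b3
  | unite_times b => uniti_times b
  | uniti_times b => unite_times b
  | swap_times b1 b2 => swap_times b2 b1
  | assocl_times b1 b2 b3 => assocr_times b1 b2 b3
  | assocr_times b1 b2 b3 => assocl_times b1 b2 b3
  | distrib0 b => factor0 b
  | factor0 b => distrib0 b
  | distrib b1 b2 b3 => factor b1 b2 b3
  | factor b1 b2 b3 => distrib b1 b2 b3
  | toSum => toBool
  | toBool => toSum
  | c_seq c1 c2 => c_seq (adjoint c2) (adjoint c1)
  | c_plus c1 c2 => c_plus (adjoint c1) (adjoint c2)
  | c_times c1 c2 => c_times (adjoint c1) (adjoint c2)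
  end.

Lemma eval_adjoint {b1 b2} (c : comb b1 b2) (v : val b1) (v' : val b2) :
  eval c v v' -> eval (adjoint c) v' v.
Proof.
  induction 1; simpl; econstructor; eauto.
Qed.

Theorem proposition1 :
  forall (b1 b2 : ty) (c : comb b1 b2),
    exists c_dag : comb b2 b1,
      forall (v : val b1) (v' : val b2), eval c v v' -> eval c_dag v' v.
Proof.
  intros b1 b2 c. exists (adjoint c). apply eval_adjoint.
Qed.
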